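(* Let $\mathcal H$ be a semi-inner product space of holomorphic functions on $\mathbb D$ with semi-norm $\|\cdot\|$, such that $zf\in\mathcal H$ whenever $f\in\mathcal H$, and $\|zf\|\ge\|f\|$ for all $f\in\mathcal H$. Then for $\lambda\in\mathbb T$ and $0\le r<1$, $$\|(z-\lambda)f\|\le\frac{2}{1+r}\|(z-r\lambda)f\|,\quad f\in\mathcal H.$$
   Context: $\mathbb D$ is the open unit disc and $\mathbb T$ the unit circle. *)

From HB Require Import structures.
From mathcomp Require Import all_boot all_order all_algebra.
From mathcomp Require Import complex.
From mathcomp Require Import all_classical all_reals topology normedtype derive.
Set Implicit Arguments. Unset Strict Implicit. Unset Printing Implicit Defensive.
Import Order.TTheory GRing.Theory Num.Theory ComplexField.
Import numFieldNormedType.Exports.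
Local Open Scope ring_scope.
Local Open Scope classical_set_scope.

Section Defs.
Variable R : realType.
Local Notation C := (complex R).

Definition disc : set C := [set z | `|z| < 1].

(* f is holomorphic on D: complex differentiable at every point of D
   (derivable over the scalar field C itself, direction 1). Functions are
   represented as total maps C -> C; only their values on D matter for
   holomorphy. *)
Definition holomorphic_on_disc (f : C -> C) : Prop :=
  forall z, disc z -> derivable (f : C^o -> C^o) z 1.

Definition fun_subspace (H : set (C -> C)) : Prop :=
  [/\ H (fun _ => 0),
      (forall f g, H f -> H g -> H (fun z => f z + g z)) &
      (forall (a : C) f, H f -> H (fun z => a * f z))].

Definition semi_inner_product (H : set (C -> C)) (ip : (C -> C) -> (C -> C) -> C)
  : Prop :=
  [/\ (forall f g h, H f -> H g -> H h ->
         ip (fun z => f z + g z) h = ip f h + ip g h),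
      (forall (a : C) f g, H f -> H g -> ip (fun z => a * f z) g = a * ip f g),
      (forall f g, H f -> H g -> ip g f = (ip f g)^*) &
      (forall f, H f -> 0 <= ip f f)].

Definition sip_norm (ip : (C -> C) -> (C -> C) -> C) (f : C -> C) : C :=
  sqrtC (ip f f).

Definition mulz (f : C -> C) : C -> C := fun z => z * f z.

End Defs.

(** For |λ| = 1 and real k one has the identity
      4 ‖u - kλf‖² - (1 + k)² ‖u - λf‖²
        = (1 - k)² ‖u + λf‖² + 2 (1 - k)(1 + k) (‖u‖² - ‖f‖²),
    whose right-hand side is nonnegative when -1 <= k <= 1 and ‖f‖ <= ‖u‖.
    Hence (1 + k) ‖u - λf‖ <= 2 ‖u - kλf‖; take u = zf and k = r. *)
From HB Require Import structures.
From mathcomp Require Import all_boot all_order all_algebra.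
From mathcomp Require Import complex.
From mathcomp Require Import all_classical all_reals topology normedtype derive.
From mathcomp Require Import ring.
Import Order.TTheory GRing.Theory Num.Theory ComplexField.
Import numFieldNormedType.Exports.
Local Open Scope ring_scope.
Local Open Scope classical_set_scope.
Local Open Scope complex_scope.

Lemma ler_pM_sqrtC (C : numClosedFieldType) (a b x y : C) :
  0 <= a -> 0 <= b -> 0 <= x -> 0 <= y ->
  (a * sqrtC x <= b * sqrtC y) = (a ^+ 2 * x <= b ^+ 2 * y).
Proof.
move=> a0 b0 x0 y0.
rewrite -{1}(sqrCK a0) -{1}(sqrCK b0) -!sqrtCM ?nnegrE ?exprn_ge0 //.
by rewrite ler_sqrtC ?nnegrE ?mulr_ge0 ?exprn_ge0.
Qed.

Section SemiInnerProduct.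
Context {R : realType}.
Local Notation C := (complex R).
Context {H : set (C -> C)} {ip : (C -> C) -> (C -> C) -> C}.
Hypotheses (H_subspace : fun_subspace H) (ip_semi : semi_inner_product H ip).

Lemma funZ_subE (u v : C -> C) (b : C) :
  (fun z => u z - b * v z) = (fun z => u z + (- b) * v z).
Proof. by apply/funext => z; rewrite mulNr. Qed.

Lemma subspace_addZ {u v : C -> C} (b : C) :
  H u -> H v -> H (fun z => u z + b * v z).
Proof. by case: H_subspace => _ HD HZ Hu Hv; apply: HD => //; apply: HZ. Qed.

Lemma subspace_subZ {u v : C -> C} (b : C) :
  H u -> H v -> H (fun z => u z - b * v z).
Proof. by rewrite funZ_subE; apply: subspace_addZ. Qed.

Lemma ip_ge0 (g : C -> C) : H g -> 0 <= ip g g.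
Proof. by case: ip_semi => _ _ _; apply. Qed.

Lemma ipDr (g h k : C -> C) : H g -> H h -> H k ->
  ip k (fun z => g z + h z) = ip k g + ip k h.
Proof.
case: H_subspace => _ HD _; case: ip_semi => ipD _ ipC _ Hg Hh Hk.
by rewrite !(ipC _ k) ?ipD ?rmorphD //; apply: HD.
Qed.

Lemma ipZr (b : C) (g h : C -> C) : H g -> H h ->
  ip h (fun z => b * g z) = b^*%R * ip h g.
Proof.
case: H_subspace => _ _ HZ; case: ip_semi => _ ipZ ipC _ Hg Hh.
by rewrite !(ipC _ h) ?ipZ ?rmorphM //; apply: HZ.
Qed.

Lemma ip_addZ (u v : C -> C) (b : C) : H u -> H v ->
  ip (fun z => u z + b * v z) (fun z => u z + b * v z) =
  ip u u + b^*%R * ip u v + b * ip v u + `|b| ^+ 2 * ip v v.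
Proof.
case: H_subspace => _ _ HZ; case: ip_semi => ipD ipZ _ _ Hu Hv.
have HbV := HZ b _ Hv; have Hw := subspace_addZ b Hu Hv.
rewrite ipD // !ipZ // !ipDr // !ipZr // normCK.
ring.
Qed.

Lemma ip_subZ (u v : C -> C) (b : C) : H u -> H v ->
  ip (fun z => u z - b * v z) (fun z => u z - b * v z) =
  ip u u - b^*%R * ip u v - b * ip v u + `|b| ^+ 2 * ip v v.
Proof. by move=> Hu Hv; rewrite funZ_subE ip_addZ // normrN rmorphN !mulNr. Qed.

Lemma ip_shift_le {u f : C -> C} {lam k : C} :
  H u -> H f -> ip f f <= ip u u -> `|lam| = 1 -> -1 <= k <= 1 ->
  (1 + k) ^+ 2 * ip (fun z => u z - lam * f z) (fun z => u z - lam * f z)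
    <= 4 * ip (fun z => u z - k * lam * f z) (fun z => u z - k * lam * f z).
Proof.
move=> Hu Hf Nfu lam1 /andP[k_ge k_le].
have k_real : k \is Num.real := ler1_real k_le.
have identity : 4 * ip (fun z => u z - k * lam * f z) (fun z => u z - k * lam * f z)
    - (1 + k) ^+ 2 * ip (fun z => u z - lam * f z) (fun z => u z - lam * f z)
  = (1 - k) ^+ 2 * ip (fun z => u z + lam * f z) (fun z => u z + lam * f z)
    + 2 * (1 - k) * (1 + k) * (ip u u - ip f f).
  rewrite !ip_subZ // ip_addZ // normrM lam1 mulr1 real_normK //.
  rewrite rmorphM /= (CrealP k_real).
  ring.
have k_geN1 : 0 <= 1 + k by rewrite -lerBlDl sub0r.
rewrite -subr_ge0 identity addr_ge0 ?mulr_ge0 ?exprn_ge0 ?ip_ge0 ?subr_ge0 //.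
exact: subspace_addZ.
Qed.

Lemma sip_norm_shift_le {u f : C -> C} {lam k : C} :
  H u -> H f -> ip f f <= ip u u -> `|lam| = 1 -> -1 <= k <= 1 ->
  (1 + k) * sip_norm ip (fun z => u z - lam * f z)
    <= 2 * sip_norm ip (fun z => u z - k * lam * f z).
Proof.
move=> Hu Hf Nfu lam1 k_bd; have /andP[k_ge _] := k_bd.
rewrite /sip_norm ler_pM_sqrtC ?ip_ge0 //; try exact: subspace_subZ.
- by rewrite [2 ^+ 2](_ : _ = 4 :> C) ?ip_shift_le // expr2 -natrM.
- by rewrite -lerBlDl sub0r.
Qed.

End SemiInnerProduct.

Theorem lemma2p5 (R : realType) (H : set (complex R -> complex R))
    (ip : (complex R -> complex R) -> (complex R -> complex R) -> complex R) :
  fun_subspace H ->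
  (forall f, H f -> holomorphic_on_disc f) ->
  semi_inner_product H ip ->
  (forall f, H f -> H (mulz f)) ->
  (forall f, H f -> sip_norm ip f <= sip_norm ip (mulz f)) ->
  forall (lambda : complex R), `|lambda| = 1 ->
  forall (r : R), 0 <= r < 1 ->
  forall f, H f ->
    sip_norm ip (fun z => (z - lambda) * f z)
      <= (2 / (1 + r))%:C * sip_norm ip (fun z => (z - r%:C * lambda) * f z).
Proof.
move=> Hsub _ Hip Hmul Hnorm lam lam1 r /andP[r0 r1] f Hf.
have Nf_le : ip f f <= ip (mulz f) (mulz f).
  by rewrite -ler_sqrtC ?nnegrE ?(ip_ge0 Hip) //; [exact: Hnorm | exact: Hmul].
have r_bd : -1 <= r%:C <= 1.
  by rewrite -(rmorph1 (real_complex R)) -rmorphN !lecR (le_trans _ r0) ?lerN10 ?ltW.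
have := sip_norm_shift_le Hsub Hip (Hmul f Hf) Hf Nf_le lam1 r_bd.
have mulzB c : (fun z => (z - c) * f z) = (fun z => mulz f z - c * f z).
  by apply/funext => z; rewrite /mulz mulrBl.
have r1_gt0 : 0 < 1 + r%:C by rewrite -(rmorph1 (real_complex R)) -rmorphD ltcR ltr_wpDr.
rewrite !mulzB -ler_pdivlMl // => /le_trans; apply.
have -> : (2 / (1 + r))%:C = 2 / (1 + r%:C) by rewrite fmorph_div !rmorphD !rmorph1.
by rewrite mulrA [_^-1 * 2]mulrC lexx.
Qed.
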